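(* Let $\rho=\eta[r,\alpha]$ be a qubit state with $r\neq g$, $J$ the closed interval with endpoints $r$ and $1-\lambda r$, and $S(s):=S(\eta[s,\kappa_s])$ for $s\in J$. For $\bar s\in J$ define \[ \xi(\bar s):=\inf\Big\{\sum_jp_jS(s_j):\ (p_j)\text{ a finite probability vector},\ s_j\in J,\ \sum_jp_js_j=\bar s\Big\}. \] Then the infimum is attained with all $s_j\in\{r,1-\lambda r\}$, and \[ \xi(\bar s)=q_{\bar s}S(\rho)+(1-q_{\bar s})\,h(1-\lambda r),\qquad q_{\bar s}=\frac{\bar s+\lambda r-1}{(1+\lambda)r-1}. \] Moreover, $I_{\mathrm{th}}(\rho)=\max_{\bar s\in J}\big[h(\bar s)-\xi(\bar s)\big]$.
   Context: Qubit memory with Hamiltonian $E_0|0\rangle\langle0|+E_1|1\rangle\langle1|$ at temperature $T$; $\lambda=e^{-(E_1-E_0)/k_{\mathrm B}T}$, $g=1/(1+\lambda)$. $\eta[r,\alpha]$ denotes the density matrix $\begin{pmatrix} r&\alpha\\ \alpha^*&1-r\end{pmatrix}$ in the energy basis. $\kappa_s=|\alpha|\frac{\sqrt{(\lambda s+r-1)(\lambda r+s-1)}}{|(\lambda+1)r-1|}$. $h(x)=-x\log_2x-(1-x)\log_2(1-x)$; $S$ is the von Neumann entropy (base 2). The set of states reachable from $\rho$ by thermal operations is $\vartheta(\rho)=\{\eta[s,\beta]: s\in J,\ |\beta|\le\kappa_s\}$. A code is a finite ensemble $\{(p_k,\sigma^{(k)})\}$ with Holevo information $\chi=S(\sum_kp_k\sigma^{(k)})-\sum_kp_kS(\sigma^{(k)})$;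 $I_{\mathrm{th}}(\rho)$ is the supremum of $\chi$ over codes with all codewords in $\vartheta(\rho)$. *)

From Stdlib Require Import Reals List.
Open Scope R_scope.

(* Complex numbers as pairs (real part, imaginary part). *)
Definition Cpx := (R * R)%type.
Definition cnorm (z : Cpx) : R := sqrt (fst z ^ 2 + snd z ^ 2).

Definition plog2 (x : R) : R := if Rle_dec x 0 then 0 else x * (ln x / ln 2).

Definition h (x : R) : R := - plog2 x - plog2 (1 - x).

(* Eigenvalues of eta[s,b] = [[s, b],[b^*, 1-s]] (a 2x2 Hermitian matrix
   of trace 1 and determinant s(1-s) - |b|^2). *)
Definition eig_p (s : R) (b : Cpx) : R :=
  (1 + sqrt ((2 * s - 1) ^ 2 + 4 * cnorm b ^ 2)) / 2.
Definition eig_m (s : R) (b : Cpx) : R :=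
  (1 - sqrt ((2 * s - 1) ^ 2 + 4 * cnorm b ^ 2)) / 2.

Definition vnS (s : R) (b : Cpx) : R := - plog2 (eig_p s b) - plog2 (eig_m s b).

Definition lamb (E0 E1 kB T : R) : R := exp (- (E1 - E0) / (kB * T)).
Definition gibbs (lam : R) : R := 1 / (1 + lam).

Definition kappa (lam r : R) (alpha : Cpx) (s : R) : R :=
  cnorm alpha * sqrt ((lam * s + r - 1) * (lam * r + s - 1))
  / Rabs ((lam + 1) * r - 1).

Definition inJ (lam r s : R) : Prop :=
  Rmin r (1 - lam * r) <= s <= Rmax r (1 - lam * r).

Definition Sfun (lam r : R) (alpha : Cpx) (s : R) : R :=
  vnS s (kappa lam r alpha s, 0).

Definition sumR {A : Type} (f : A -> R) (l : list A) : R :=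
  fold_right (fun x acc => f x + acc) 0 l.

Definition is_decomp (lam r sbar : R) (d : list (R * R)) : Prop :=
  Forall (fun ps => 0 <= fst ps /\ inJ lam r (snd ps)) d /\
  sumR fst d = 1 /\
  sumR (fun ps => fst ps * snd ps) d = sbar.

Definition decomp_value (lam r : R) (alpha : Cpx) (d : list (R * R)) : R :=
  sumR (fun ps => fst ps * Sfun lam r alpha (snd ps)) d.

Definition xi_set (lam r : R) (alpha : Cpx) (sbar : R) (v : R) : Prop :=
  exists d, is_decomp lam r sbar d /\ v = decomp_value lam r alpha d.

Definition is_lower_bound (E : R -> Prop) (m : R) : Prop :=
  forall x, E x -> m <= x.
Definition is_glb (E : R -> Prop) (m : R) : Prop :=
  is_lower_bound E m /\ (forall b, is_lower_bound E b -> b <= m).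

Definition in_theta (lam r : R) (alpha : Cpx) (sb : R * Cpx) : Prop :=
  inJ lam r (fst sb) /\ cnorm (snd sb) <= kappa lam r alpha (fst sb).

Definition is_code (lam r : R) (alpha : Cpx) (c : list (R * (R * Cpx))) : Prop :=
  Forall (fun k => 0 <= fst k /\ in_theta lam r alpha (snd k)) c /\
  sumR fst c = 1.

(* Holevo information: S(sum p_k sigma_k) - sum p_k S(sigma_k);
   sum p_k eta[s_k,beta_k] = eta[sum p_k s_k, sum p_k beta_k]. *)
Definition holevo (c : list (R * (R * Cpx))) : R :=
  let sav := sumR (fun k => fst k * fst (snd k)) c in
  let bav : Cpx := (sumR (fun k => fst k * fst (snd (snd k))) c,
                  sumR (fun k => fst k * snd (snd (snd k))) c) in
  vnS sav bav - sumR (fun k => fst k * vnS (fst (snd k)) (snd (snd k))) c.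

Definition chi_set (lam r : R) (alpha : Cpx) (v : R) : Prop :=
  exists c, is_code lam r alpha c /\ v = holevo c.

From Coquelicot Require Import Coquelicot.
From Stdlib Require Import Reals List Lra Psatz.
Open Scope R_scope.

(* The entropy of [eta[s, beta]] is a function of its squared Bloch length
   [u = (2s - 1)^2 + 4 |beta|^2] alone, and this function is nonincreasing and
   concave on [[0, 1]].  For [s] in [J] the squared Bloch length of [eta[s, kappa_s]]
   lies below the chord joining those of [rho] and of [eta[1 - lam r, 0]], so every
   state of [theta(rho)] with population [s] has entropy at least the affine
   interpolation [q_s S(rho) + (1 - q_s) h(1 - lam r)].  Averaging this affine bound
   gives [xi], attained by the two endpoints.  For a code, the average state has
   entropy at most [h] of its average population, so [chi <= h - xi] at that
   population; mixing [rho] with its coherence-flipped copy and [eta[1 - lam r, 0]]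
   gives equality. *)

Lemma ln_le_sub1 y : 0 < y -> ln y <= y - 1.
Proof. intros Hy. pose proof (exp_ineq1_le (ln y)) as E. rewrite exp_ln in E; lra. Qed.

Lemma Rinv_nonneg x : 0 <= x -> 0 <= / x.
Proof.
  intros Hx. destruct (Req_dec x 0) as [->|Hx0].
  - rewrite Rinv_0; lra.
  - apply Rlt_le, Rinv_0_lt_compat; lra.
Qed.

Lemma sqrt_in01 u : 0 < u < 1 -> 0 < sqrt u < 1.
Proof.
  intros Hu. split; [apply sqrt_lt_R0; lra|].
  rewrite <- sqrt_1. apply sqrt_lt_1; lra.
Qed.

Lemma is_derive_continuity_pt f x l : is_derive f x l -> continuity_pt f x.
Proof. intros H. apply derivable_continuous_pt. exists l. apply is_derive_Reals, H. Qed.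

(* [MVT_gen] only locates the intermediate point in the closed interval, too weak
   at the endpoint [0] where the derivatives below blow up. *)
Lemma MVT_open f df a b : a < b ->
  (forall x, a < x < b -> is_derive f x (df x)) ->
  (forall x, a <= x <= b -> continuity_pt f x) ->
  exists c, a < c < b /\ f b - f a = df c * (b - a).
Proof.
  intros Hab Hd Hc.
  pose (pr1 := fun c (P : a < c < b) =>
     exist (fun l => derivable_pt_abs f c l) (df c) (proj1 (is_derive_Reals _ _ _) (Hd c P))).
  pose (pr2 := fun c (P : a < c < b) => derivable_pt_id c).
  destruct (MVT f id a b pr1 pr2 Hab Hc) as [c [P HP]].
  { intros; apply derivable_continuous_pt, derivable_pt_id. }
  exists c; split; [exact P|].
  unfold pr2 in HP. rewrite derive_pt_id in HP. simpl in HP. unfold id in HP. lra.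
Qed.

Lemma xlnx_abs_le y : 0 < y <= 1 -> Rabs (y * ln y) <= 2 * sqrt y.
Proof.
  intros [H0 H1].
  assert (Hs : 0 < sqrt y) by (apply sqrt_lt_R0; lra).
  assert (Hsy : sqrt y * sqrt y = y) by (apply sqrt_sqrt; lra).
  assert (Hl : ln y <= 0) by (rewrite <- ln_1; apply ln_le; lra).
  assert (Hinv : ln (/ sqrt y) <= / sqrt y - 1)
    by (apply ln_le_sub1, Rinv_0_lt_compat; lra).
  assert (Hln : ln y = - 2 * ln (/ sqrt y)).
  { rewrite ln_Rinv by lra. rewrite <- Hsy at 1. rewrite ln_mult by lra. ring. }
  assert (Hys : y * / sqrt y = sqrt y) by (rewrite <- Hsy at 1; field; lra).
  rewrite Rabs_left1 by nra.
  rewrite Hln. nra.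
Qed.

Lemma plog2_abs_le y : 0 <= y <= 1 -> Rabs (plog2 y) * ln 2 <= 2 * sqrt y.
Proof.
  intros Hy. pose proof ln_lt_2. unfold plog2.
  destruct (Rle_dec y 0).
  - rewrite Rabs_R0, Rmult_0_l. apply Rmult_le_pos; [lra|apply sqrt_pos].
  - replace (y * (ln y / ln 2)) with (y * ln y / ln 2) by (field; lra).
    unfold Rdiv. rewrite Rabs_mult, (Rabs_right (/ ln 2))
      by (apply Rle_ge, Rlt_le, Rinv_0_lt_compat; lra).
    rewrite Rmult_assoc, Rinv_l, Rmult_1_r by lra.
    apply xlnx_abs_le; lra.
Qed.

Lemma plog2_continuity_pt x : continuity_pt plog2 x.
Proof.
  pose proof ln_lt_2.
  destruct (Rtotal_order x 0) as [Hx|[->|Hx]].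
  - apply continuity_pt_locally_ext with (f := fun _ => 0) (a := - x); [lra| |].
    + intros y Hy. apply Rabs_def2 in Hy. unfold plog2.
      destruct (Rle_dec y 0); [reflexivity|lra].
    + apply continuity_pt_const. intros ? ?; reflexivity.
  - intros eps Heps.
    set (d := Rmin 1 ((eps * ln 2 / 2) ^ 2)).
    assert (Hd : 0 < d) by (apply Rmin_pos; [lra|apply pow_lt; nra]).
    exists d; split; [exact Hd|].
    intros y [_ Hy]. simpl in Hy |- *. unfold R_dist in *. rewrite Rminus_0_r in Hy.
    assert (Hp0 : plog2 0 = 0) by (unfold plog2; destruct (Rle_dec 0 0); lra).
    rewrite Hp0, Rminus_0_r.
    destruct (Rle_dec y 0) as [Hy0|Hy0].
    { unfold plog2. destruct (Rle_dec y 0); [rewrite Rabs_R0; lra|contradiction]. }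
    apply Rabs_def2 in Hy.
    assert (Hd1 : d <= 1) by apply Rmin_l.
    assert (Hd2 : d <= (eps * ln 2 / 2) ^ 2) by apply Rmin_r.
    assert (Hsq : sqrt y < eps * ln 2 / 2).
    { rewrite <- (sqrt_pow2 (eps * ln 2 / 2)) by nra. apply sqrt_lt_1; nra. }
    pose proof (plog2_abs_le y ltac:(lra)).
    apply Rmult_lt_reg_r with (ln 2); lra.
  - apply continuity_pt_locally_ext with (f := fun y => y * (ln y / ln 2)) (a := x); [lra| |].
    + intros y Hy. apply Rabs_def2 in Hy. unfold plog2.
      destruct (Rle_dec y 0); [lra|reflexivity].
    + eapply is_derive_continuity_pt. auto_derive; [lra|reflexivity].
Qed.

Definition log_odds (v : R) : R := ln ((1 + v) / 2) - ln ((1 - v) / 2).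

Lemma is_derive_log_odds v : -1 < v < 1 -> is_derive log_odds v (2 / (1 - v ^ 2)).
Proof.
  intros Hv. unfold log_odds. auto_derive.
  - repeat split; lra.
  - field. repeat split; try lra. nra.
Qed.

Lemma log_odds_0 : log_odds 0 = 0.
Proof. unfold log_odds. rewrite Rplus_0_r, Rminus_0_r. ring. Qed.

Lemma log_odds_slope_mono a b : 0 < a -> a <= b -> b < 1 ->
  0 <= log_odds a /\ log_odds a / a <= log_odds b / b.
Proof.
  intros Ha Hab Hb.
  assert (Hd : forall x y, 0 <= x < 1 -> x <= y < 1 -> 2 / (1 - x ^ 2) <= 2 / (1 - y ^ 2)).
  { intros x y Hx Hy. apply Rmult_le_compat_l; [lra|]. apply Rinv_le_contravar; nra. }
  assert (Hc : forall x, 0 <= x <= b -> continuity_pt log_odds x).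
  { intros x Hx. eapply is_derive_continuity_pt, is_derive_log_odds; lra. }
  destruct (MVT_open log_odds (fun v => 2 / (1 - v ^ 2)) 0 a Ha) as [c1 [Hc1 E1]].
  { intros; apply is_derive_log_odds; lra. }
  { intros; apply Hc; lra. }
  rewrite log_odds_0, !Rminus_0_r in E1.
  assert (D1 : 0 < 2 / (1 - c1 ^ 2)) by (apply Rdiv_lt_0_compat; nra).
  assert (Ea : log_odds a / a = 2 / (1 - c1 ^ 2)) by (rewrite E1; field; repeat split; nra).
  split; [nra|].
  rewrite Ea. apply Rmult_le_reg_r with b; [lra|].
  unfold Rdiv at 2. rewrite Rmult_assoc, Rinv_l, Rmult_1_r by lra.
  destruct (Req_dec a b) as [<-|Hne]; [rewrite E1; lra|].
  destruct (MVT_open log_odds (fun v => 2 / (1 - v ^ 2)) a b ltac:(lra)) as [c2 [Hc2 E2]].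
  { intros; apply is_derive_log_odds; lra. }
  { intros; apply Hc; lra. }
  pose proof (Hd c1 c2 ltac:(lra) ltac:(lra)). nra.
Qed.

Definition bloch_entropy (u : R) : R :=
  - plog2 ((1 + sqrt u) / 2) - plog2 ((1 - sqrt u) / 2).

Definition bloch_entropy_deriv (u : R) : R := - log_odds (sqrt u) / (4 * sqrt u * ln 2).

Lemma vnS_bloch s b : vnS s b = bloch_entropy ((2 * s - 1) ^ 2 + 4 * cnorm b ^ 2).
Proof. reflexivity. Qed.

Lemma h_bloch s : h s = bloch_entropy ((2 * s - 1) ^ 2).
Proof.
  unfold bloch_entropy, h.
  replace ((2 * s - 1) ^ 2) with (Rsqr (2 * s - 1)) by (unfold Rsqr; ring).
  rewrite sqrt_Rsqr_abs.
  destruct (Rle_dec 0 (2 * s - 1)).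
  - rewrite Rabs_right by lra.
    replace ((1 + (2 * s - 1)) / 2) with s by field.
    replace ((1 - (2 * s - 1)) / 2) with (1 - s) by field. reflexivity.
  - rewrite Rabs_left by lra.
    replace ((1 + - (2 * s - 1)) / 2) with (1 - s) by field.
    replace ((1 - - (2 * s - 1)) / 2) with s by field. ring.
Qed.

Lemma is_derive_bloch_entropy u : 0 < u < 1 ->
  is_derive bloch_entropy u (bloch_entropy_deriv u).
Proof.
  intros Hu. pose proof ln_lt_2.
  destruct (sqrt_in01 u Hu) as [Hs1 Hs2].
  apply is_derive_ext_loc with
    (f := fun t => - ((1 + sqrt t) / 2 * (ln ((1 + sqrt t) / 2) / ln 2))
                   - ((1 - sqrt t) / 2 * (ln ((1 - sqrt t) / 2) / ln 2))).
  - assert (Hd : 0 < Rmin u (1 - u)) by (apply Rmin_pos; lra).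
    exists (mkposreal _ Hd). intros t Ht.
    unfold ball in Ht; simpl in Ht. unfold AbsRing_ball, abs, minus, plus, opp in Ht; simpl in Ht.
    apply Rabs_def2 in Ht. pose proof (Rmin_l u (1 - u)). pose proof (Rmin_r u (1 - u)).
    destruct (sqrt_in01 t) as [Ht1 Ht2]; [lra|].
    unfold bloch_entropy, plog2.
    destruct (Rle_dec ((1 + sqrt t) / 2) 0); [lra|].
    destruct (Rle_dec ((1 - sqrt t) / 2) 0); [lra|]. reflexivity.
  - auto_derive.
    + repeat split; lra.
    + unfold bloch_entropy_deriv, log_odds, Rminus, Rdiv. field. repeat split; lra.
Qed.

Lemma bloch_entropy_continuity_pt u : 0 <= u -> continuity_pt bloch_entropy u.
Proof.
  intros Hu.
  assert (Haff : forall c, continuity_pt (fun t => plog2 ((1 + c * sqrt t) / 2)) u).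
  { intros c. apply (continuity_pt_comp (fun t => (1 + c * sqrt t) / 2) plog2).
    - apply (continuity_pt_comp sqrt (fun y => (1 + c * y) / 2)).
      + apply continuity_pt_sqrt, Hu.
      + eapply is_derive_continuity_pt. auto_derive; [trivial|reflexivity].
    - apply plog2_continuity_pt. }
  apply continuity_pt_minus; [apply continuity_pt_opp|].
  - eapply continuity_pt_ext; [|apply (Haff 1)]. intros t. cbv beta. now rewrite Rmult_1_l.
  - eapply continuity_pt_ext; [|apply (Haff (-1))]. intros t. cbv beta. do 2 f_equal. ring.
Qed.

Lemma bloch_entropy_deriv_nonpos_antitone u1 u2 : 0 < u1 -> u1 <= u2 -> u2 < 1 ->
  bloch_entropy_deriv u2 <= bloch_entropy_deriv u1 /\ bloch_entropy_deriv u1 <= 0.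
Proof.
  intros H1 H12 H2. pose proof ln_lt_2.
  destruct (sqrt_in01 u1) as [a1 a2]; [lra|].
  destruct (sqrt_in01 u2) as [b1 b2]; [lra|].
  assert (Hs : sqrt u1 <= sqrt u2) by (apply sqrt_le_1_alt; lra).
  destruct (log_odds_slope_mono (sqrt u1) (sqrt u2) a1 Hs b2) as [E0 E1].
  assert (K : forall v, 0 < v ->
    - log_odds v / (4 * v * ln 2) = - (log_odds v / v) * / (4 * ln 2)).
  { intros v Hv. field. lra. }
  assert (Hi : 0 < / (4 * ln 2)) by (apply Rinv_0_lt_compat; lra).
  assert (Hq : 0 <= log_odds (sqrt u1) / sqrt u1) by (apply Rdiv_le_0_compat; lra).
  unfold bloch_entropy_deriv. rewrite !K by lra. split; nra.
Qed.

Lemma bloch_entropy_antitone x y : 0 <= x -> x <= y -> y <= 1 ->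
  bloch_entropy y <= bloch_entropy x.
Proof.
  intros Hx Hxy Hy.
  destruct (Req_dec x y) as [<-|Hne]; [lra|].
  destruct (MVT_open bloch_entropy bloch_entropy_deriv x y) as [c [Hc E]]; [lra| | |].
  { intros; apply is_derive_bloch_entropy; lra. }
  { intros; apply bloch_entropy_continuity_pt; lra. }
  destruct (bloch_entropy_deriv_nonpos_antitone c c) as [_ Hd]; nra.
Qed.

Lemma bloch_entropy_concave_lt x y t : 0 <= x -> x < y -> y <= 1 -> 0 < t < 1 ->
  t * bloch_entropy x + (1 - t) * bloch_entropy y
  <= bloch_entropy (t * x + (1 - t) * y).
Proof.
  intros Hx Hxy Hy Ht.
  set (m := t * x + (1 - t) * y).
  assert (Hm1 : x < m) by (unfold m; nra).
  assert (Hm2 : m < y) by (unfold m; nra).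
  destruct (MVT_open bloch_entropy bloch_entropy_deriv x m Hm1) as [c1 [Hc1 E1]].
  { intros; apply is_derive_bloch_entropy; lra. }
  { intros; apply bloch_entropy_continuity_pt; lra. }
  destruct (MVT_open bloch_entropy bloch_entropy_deriv m y Hm2) as [c2 [Hc2 E2]].
  { intros; apply is_derive_bloch_entropy; lra. }
  { intros; apply bloch_entropy_continuity_pt; lra. }
  destruct (bloch_entropy_deriv_nonpos_antitone c1 c2) as [Hd _]; try lra.
  replace (m - x) with ((1 - t) * (y - x)) in E1 by (unfold m; ring).
  replace (y - m) with (t * (y - x)) in E2 by (unfold m; ring).
  assert (0 <= t * (1 - t) * (y - x)) by (apply Rmult_le_pos; nra).
  nra.
Qed.

Lemma bloch_entropy_concave x y t : 0 <= x <= 1 -> 0 <= y <= 1 -> 0 <= t <= 1 ->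
  t * bloch_entropy x + (1 - t) * bloch_entropy y
  <= bloch_entropy (t * x + (1 - t) * y).
Proof.
  intros Hx Hy Ht.
  destruct (Req_dec t 0) as [->|Ht0].
  { replace (0 * x + (1 - 0) * y) with y by ring. lra. }
  destruct (Req_dec t 1) as [->|Ht1].
  { replace (1 * x + (1 - 1) * y) with x by ring. lra. }
  destruct (Rtotal_order x y) as [H|[<-|H]].
  - apply bloch_entropy_concave_lt; lra.
  - replace (t * x + (1 - t) * x) with x by ring. lra.
  - pose proof (bloch_entropy_concave_lt y x (1 - t) ltac:(lra) H ltac:(lra) ltac:(lra)) as C.
    replace (1 - (1 - t)) with t in C by ring.
    replace (t * x + (1 - t) * y) with ((1 - t) * y + t * x) by ring. lra.
Qed.

(* Beyond [u = 1] the formula is junk (a negative "eigenvalue" contributes [0]),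
   but it stays [<= 0]; this keeps the bound valid without proving [u <= 1]. *)
Lemma bloch_entropy_antitone_from x y : 0 <= x <= 1 -> x <= y ->
  bloch_entropy y <= bloch_entropy x.
Proof.
  intros Hx Hxy. destruct (Rle_dec y 1); [apply bloch_entropy_antitone; lra|].
  pose proof ln_lt_2.
  assert (Hs : 1 < sqrt y) by (rewrite <- sqrt_1; apply sqrt_lt_1; lra).
  assert (Hy : bloch_entropy y <= 0).
  { unfold bloch_entropy, plog2.
    destruct (Rle_dec ((1 - sqrt y) / 2) 0); [|lra].
    destruct (Rle_dec ((1 + sqrt y) / 2) 0); [lra|].
    assert (0 < ln ((1 + sqrt y) / 2)) by (rewrite <- ln_1; apply ln_increasing; lra).
    assert (0 <= (1 + sqrt y) / 2 * (ln ((1 + sqrt y) / 2) / ln 2))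
      by (apply Rmult_le_pos; [lra|apply Rlt_le, Rdiv_lt_0_compat; lra]).
    lra. }
  assert (H1 : bloch_entropy 1 = 0).
  { unfold bloch_entropy, plog2. rewrite sqrt_1.
    replace ((1 + 1) / 2) with 1 by field. replace ((1 - 1) / 2) with 0 by field.
    destruct (Rle_dec 1 0); [lra|]. destruct (Rle_dec 0 0); [|lra].
    rewrite ln_1. unfold Rdiv. ring. }
  pose proof (bloch_entropy_antitone x 1 ltac:(lra) ltac:(lra) ltac:(lra)). lra.
Qed.

Lemma h_continuity_pt x : continuity_pt h x.
Proof.
  unfold h. apply continuity_pt_minus.
  - apply continuity_pt_opp, plog2_continuity_pt.
  - apply (continuity_pt_comp (fun t => 1 - t) plog2).
    + eapply is_derive_continuity_pt. auto_derive; [trivial|reflexivity].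
    + apply plog2_continuity_pt.
Qed.

Lemma cnorm_nonneg b : 0 <= cnorm b.
Proof. apply sqrt_pos. Qed.

Lemma cnorm_real k : 0 <= k -> cnorm (k, 0) = k.
Proof.
  intros Hk. unfold cnorm; cbn [fst snd].
  replace (k ^ 2 + 0 ^ 2) with (k ^ 2) by ring. apply sqrt_pow2, Hk.
Qed.

Lemma cnorm_opp x y : cnorm (- x, - y) = cnorm (x, y).
Proof. unfold cnorm; cbn [fst snd]. f_equal. ring. Qed.

Lemma vnS_0 s : vnS s (0, 0) = h s.
Proof. rewrite vnS_bloch, h_bloch, cnorm_real by lra. f_equal. ring. Qed.

Lemma sumR_le {A : Type} (f g : A -> R) l :
  Forall (fun k => f k <= g k) l -> sumR f l <= sumR g l.
Proof. induction 1; simpl; [apply Rle_refl|apply Rplus_le_compat; auto]. Qed.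

Lemma sumR_affine {A : Type} (w x : A -> R) a b l :
  sumR (fun k => w k * (a + b * x k)) l = a * sumR w l + b * sumR (fun k => w k * x k) l.
Proof. induction l as [|k l IH]; simpl; [|rewrite IH]; ring. Qed.

Lemma sumR_mean_bounds {A : Type} (w x : A -> R) lo hi l :
  Forall (fun k => 0 <= w k /\ lo <= x k <= hi) l -> sumR w l = 1 ->
  lo <= sumR (fun k => w k * x k) l <= hi.
Proof.
  intros Hl Hw.
  assert (Hc : forall c, sumR (fun k => w k * (c + 0 * x k)) l = c)
    by (intros c; rewrite sumR_affine, Hw; ring).
  split.
  - rewrite <- (Hc lo) at 1. apply sumR_le.
    eapply Forall_impl; [|exact Hl]. intros k [Hk Hxk]. nra.
  - rewrite <- (Hc hi). apply sumR_le.
    eapply Forall_impl; [|exact Hl]. intros k [Hk Hxk]. nra.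
Qed.

Section ThermalOperations.

Variables (lam r : R) (a : Cpx).
Hypotheses (Hlam : 0 < lam < 1) (Hr : 0 <= r <= 1) (Ha : cnorm a ^ 2 <= r * (1 - r))
  (HD : (1 + lam) * r - 1 <> 0).

(* [q_weight s] is the paper's [q_s], the weight of the endpoint [r] when [s] is
   written as a convex combination of [r] and [1 - lam r]. *)
Definition q_weight (s : R) : R := (s + lam * r - 1) / ((1 + lam) * r - 1).

Definition xi_formula (s : R) : R :=
  q_weight s * vnS r a + (1 - q_weight s) * h (1 - lam * r).

Definition kappa_radicand (s : R) : R := (lam * s + r - 1) * (lam * r + s - 1).

Lemma inJ_oriented s : inJ lam r s ->
  (0 < (1 + lam) * r - 1 /\ 1 - lam * r <= s <= r) \/
  ((1 + lam) * r - 1 < 0 /\ r <= s <= 1 - lam * r).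
Proof.
  intros [H1 H2]. destruct (Rtotal_order 0 ((1 + lam) * r - 1)) as [Dp|[D0|Dn]].
  - left. rewrite Rmin_right in H1 by nra. rewrite Rmax_left in H2 by nra. lra.
  - now contradiction HD.
  - right. rewrite Rmin_left in H1 by nra. rewrite Rmax_right in H2 by nra. lra.
Qed.

Lemma inJ_r : inJ lam r r.
Proof. split; [apply Rmin_l|apply Rmax_l]. Qed.

Lemma inJ_endpoint : inJ lam r (1 - lam * r).
Proof. split; [apply Rmin_r|apply Rmax_r]. Qed.

Lemma inJ_unit s : inJ lam r s -> 0 <= s <= 1.
Proof. intros HJ. destruct (inJ_oriented s HJ); nra. Qed.

Lemma q_weight_bounds s : inJ lam r s -> 0 <= q_weight s <= 1.
Proof.
  intros HJ. unfold q_weight.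
  destruct (inJ_oriented s HJ) as [[D Hs]|[D Hs]].
  - split; [apply Rdiv_le_0_compat; lra|].
    apply Rmult_le_reg_r with ((1 + lam) * r - 1); [lra|].
    unfold Rdiv. rewrite Rmult_assoc, Rinv_l by lra. lra.
  - replace ((s + lam * r - 1) / ((1 + lam) * r - 1))
      with ((1 - lam * r - s) / (1 - (1 + lam) * r)) by (field; lra).
    split; [apply Rdiv_le_0_compat; lra|].
    apply Rmult_le_reg_r with (1 - (1 + lam) * r); [lra|].
    unfold Rdiv. rewrite Rmult_assoc, Rinv_l by lra. lra.
Qed.

Lemma q_weight_interp s : s = q_weight s * r + (1 - q_weight s) * (1 - lam * r).
Proof. unfold q_weight. field. exact HD. Qed.

Lemma xi_formula_affine s : xi_formula s = xi_formula 0 + (xi_formula 1 - xi_formula 0) * s.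
Proof. unfold xi_formula, q_weight. field. exact HD. Qed.

Lemma xi_formula_mean {A : Type} (w x : A -> R) l : sumR w l = 1 ->
  sumR (fun k => w k * xi_formula (x k)) l = xi_formula (sumR (fun k => w k * x k) l).
Proof.
  intros Hw.
  transitivity (sumR (fun k => w k * (xi_formula 0 + (xi_formula 1 - xi_formula 0) * x k)) l).
  - clear Hw. induction l as [|k l IH]; simpl; [reflexivity|].
    now rewrite IH, <- xi_formula_affine.
  - rewrite sumR_affine, Hw, (xi_formula_affine (sumR _ l)). ring.
Qed.

Lemma kappa_nonneg s : 0 <= kappa lam r a s.
Proof.
  unfold kappa, Rdiv. apply Rmult_le_pos.
  - apply Rmult_le_pos; [apply cnorm_nonneg|apply sqrt_pos].
  - apply Rinv_nonneg, Rabs_pos.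
Qed.

Lemma kappa_radicand_nonneg s : inJ lam r s -> 0 <= kappa_radicand s.
Proof.
  intros HJ. unfold kappa_radicand.
  destruct (inJ_oriented s HJ) as [[D Hs]|[D Hs]].
  - apply Rmult_le_pos; nra.
  - replace ((lam * s + r - 1) * (lam * r + s - 1))
      with ((1 - lam * s - r) * (1 - lam * r - s)) by ring.
    apply Rmult_le_pos; nra.
Qed.

Lemma kappa_sq s : inJ lam r s ->
  kappa lam r a s ^ 2 = cnorm a ^ 2 / ((1 + lam) * r - 1) ^ 2 * kappa_radicand s.
Proof.
  intros HJ. unfold kappa.
  replace ((lam + 1) * r - 1) with ((1 + lam) * r - 1) by ring.
  assert (HA : Rabs ((1 + lam) * r - 1) <> 0) by (apply Rabs_no_R0, HD).
  unfold Rdiv. rewrite !Rpow_mult_distr, pow2_sqrt by apply (kappa_radicand_nonneg s HJ).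
  rewrite pow_inv, pow2_abs. fold (kappa_radicand s). ring.
Qed.

Lemma kappa_at_r : kappa lam r a r = cnorm a.
Proof.
  unfold kappa.
  replace ((lam * r + r - 1) * (lam * r + r - 1)) with (Rsqr ((lam + 1) * r - 1))
    by (unfold Rsqr; ring).
  rewrite sqrt_Rsqr_abs. field. apply Rabs_no_R0.
  replace ((lam + 1) * r - 1) with ((1 + lam) * r - 1) by ring. exact HD.
Qed.

Lemma kappa_at_endpoint : kappa lam r a (1 - lam * r) = 0.
Proof.
  unfold kappa. replace (lam * r + (1 - lam * r) - 1) with 0 by ring.
  rewrite Rmult_0_r, sqrt_0. unfold Rdiv. ring.
Qed.

(* The squared Bloch length of [eta[s, kappa_s]] lies below the chord joining those
   of [rho] and of [eta[1 - lam r, 0]]; the gap is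
   [q (1 - q) (r - (1 - lam r))^2 (4 + 4 lam |alpha|^2 / ((1 + lam) r - 1)^2)]. *)
Lemma bloch_sq_below_chord s : inJ lam r s ->
  (2 * s - 1) ^ 2 + 4 * kappa lam r a s ^ 2 <=
  q_weight s * ((2 * r - 1) ^ 2 + 4 * cnorm a ^ 2)
  + (1 - q_weight s) * (2 * (1 - lam * r) - 1) ^ 2.
Proof.
  intros HJ. pose proof (q_weight_bounds s HJ) as Hq.
  set (c := cnorm a ^ 2 / ((1 + lam) * r - 1) ^ 2).
  assert (Hc : 0 <= c)
    by (apply Rmult_le_pos; [apply pow2_ge_0|apply Rinv_nonneg, pow2_ge_0]).
  assert (Ha2 : cnorm a ^ 2 = c * ((1 + lam) * r - 1) ^ 2) by (unfold c; field; exact HD).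
  assert (Hgap : 0 <= q_weight s * (1 - q_weight s) * (r - (1 - lam * r)) ^ 2 * (4 + 4 * c * lam)).
  { apply Rmult_le_pos; [apply Rmult_le_pos; [nra|apply pow2_ge_0]|nra]. }
  pose proof (q_weight_interp s) as Hs.
  set (q := q_weight s) in *.
  rewrite kappa_sq by exact HJ. fold c.
  assert (Hid : q * ((2 * r - 1) ^ 2 + 4 * cnorm a ^ 2) + (1 - q) * (2 * (1 - lam * r) - 1) ^ 2
    - ((2 * s - 1) ^ 2 + 4 * (c * kappa_radicand s))
    = q * (1 - q) * (r - (1 - lam * r)) ^ 2 * (4 + 4 * c * lam)).
  { rewrite Ha2. unfold kappa_radicand. rewrite Hs. ring. }
  lra.
Qed.

Lemma vnS_ge_xi_formula s b : inJ lam r s -> cnorm b <= kappa lam r a s ->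
  xi_formula s <= vnS s b.
Proof.
  intros HJ Hb.
  pose proof (q_weight_bounds s HJ) as Hq.
  pose proof (bloch_sq_below_chord s HJ) as Hchord.
  set (q := q_weight s) in *.
  set (X1 := (2 * r - 1) ^ 2 + 4 * cnorm a ^ 2) in *.
  set (X2 := (2 * (1 - lam * r) - 1) ^ 2) in *.
  assert (HX1 : 0 <= X1 <= 1).
  { unfold X1. pose proof (pow2_ge_0 (cnorm a)). pose proof (pow2_ge_0 (2 * r - 1)). nra. }
  assert (HX2 : 0 <= X2 <= 1) by (unfold X2; split; [apply pow2_ge_0|nra]).
  assert (Hb2 : cnorm b ^ 2 <= kappa lam r a s ^ 2)
    by (pose proof (cnorm_nonneg b); nra).
  pose proof (pow2_ge_0 (2 * s - 1)). pose proof (pow2_ge_0 (cnorm b)).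
  unfold xi_formula. fold q. rewrite vnS_bloch, h_bloch. fold X1 X2.
  apply Rle_trans with (bloch_entropy (q * X1 + (1 - q) * X2)).
  - apply bloch_entropy_concave; lra.
  - apply bloch_entropy_antitone; nra.
Qed.

Lemma Sfun_ge_xi_formula s : inJ lam r s -> xi_formula s <= Sfun lam r a s.
Proof.
  intros HJ. apply vnS_ge_xi_formula; [exact HJ|].
  rewrite cnorm_real by apply kappa_nonneg. apply Rle_refl.
Qed.

Lemma xi_formula_le_decomp_value sbar d : is_decomp lam r sbar d ->
  xi_formula sbar <= decomp_value lam r a d.
Proof.
  intros [HF [H1 H2]]. rewrite <- H2, <- xi_formula_mean by exact H1.
  apply sumR_le. eapply Forall_impl; [|exact HF].
  intros [p s] [Hp HJ]. apply Rmult_le_compat_l; [exact Hp|].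
  apply Sfun_ge_xi_formula, HJ.
Qed.

Lemma endpoint_decomp sbar : inJ lam r sbar ->
  exists d, is_decomp lam r sbar d /\
    Forall (fun ps => snd ps = r \/ snd ps = 1 - lam * r) d /\
    decomp_value lam r a d = xi_formula sbar.
Proof.
  intros HJ. pose proof (q_weight_bounds sbar HJ) as Hq.
  exists ((q_weight sbar, r) :: (1 - q_weight sbar, 1 - lam * r) :: nil).
  split; [split; [|split]|split].
  - repeat apply Forall_cons; cbn [fst snd];
      [split; [lra|apply inJ_r]|split; [lra|apply inJ_endpoint]|apply Forall_nil].
  - cbn. ring.
  - cbn. rewrite (q_weight_interp sbar) at 3. ring.
  - repeat apply Forall_cons; cbn [snd]; auto.
  - unfold decomp_value, Sfun, xi_formula. cbn [sumR fold_right fst snd].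
    rewrite kappa_at_r, kappa_at_endpoint, vnS_0.
    rewrite !vnS_bloch, cnorm_real by apply cnorm_nonneg. ring.
Qed.

Lemma xi_set_glb sbar : inJ lam r sbar -> is_glb (xi_set lam r a sbar) (xi_formula sbar).
Proof.
  intros HJ. split.
  - intros x [d [Hd ->]]. apply xi_formula_le_decomp_value, Hd.
  - intros m Hm. destruct (endpoint_decomp sbar HJ) as [d [Hd [_ Hv]]].
    apply Hm. exists d. split; [exact Hd|now rewrite Hv].
Qed.

Definition code_population (c : list (R * (R * Cpx))) : R :=
  sumR (fun k => fst k * fst (snd k)) c.

Lemma code_population_inJ c : is_code lam r a c -> inJ lam r (code_population c).
Proof.
  intros [HF H1]. apply sumR_mean_bounds; [|exact H1].
  eapply Forall_impl; [|exact HF]. intros k [Hk [HJ _]]. split; [exact Hk|exact HJ].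
Qed.

Lemma holevo_le c : is_code lam r a c ->
  holevo c <= h (code_population c) - xi_formula (code_population c).
Proof.
  intros Hc. pose proof (inJ_unit _ (code_population_inJ c Hc)) as Hm.
  destruct Hc as [HF H1].
  unfold holevo. fold (code_population c).
  set (m := code_population c) in *.
  set (bav := (sumR (fun k => fst k * fst (snd (snd k))) c,
               sumR (fun k => fst k * snd (snd (snd k))) c)).
  assert (Hup : vnS m bav <= h m).
  { rewrite vnS_bloch, h_bloch. pose proof (pow2_ge_0 (cnorm bav)).
    apply bloch_entropy_antitone_from; [split; [apply pow2_ge_0|nra]|lra]. }
  assert (Hlow : xi_formula m <= sumR (fun k => fst k * vnS (fst (snd k)) (snd (snd k))) c).
  { unfold m, code_population. rewrite <- xi_formula_mean by exact H1.
    apply sumR_le. eapply Forall_impl; [|exact HF].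
    intros [p [s b]] [Hp [HJ Hb]]. cbn [fst snd] in *.
    apply Rmult_le_compat_l; [exact Hp|]. apply vnS_ge_xi_formula; assumption. }
  lra.
Qed.

(* Equality in [holevo_le]: mixing [rho] with its conjugate under [alpha -> -alpha]
   cancels the coherences, so the average state is diagonal. *)
Lemma holevo_attains s : inJ lam r s -> chi_set lam r a (h s - xi_formula s).
Proof.
  intros HJ. pose proof (q_weight_bounds s HJ) as Hq.
  pose proof (q_weight_interp s) as Hs.
  set (q := q_weight s) in *.
  exists ((q / 2, (r, a)) :: (q / 2, (r, (- fst a, - snd a))) ::
          (1 - q, (1 - lam * r, (0, 0))) :: nil).
  assert (Hopp : cnorm (- fst a, - snd a) = cnorm a)
    by (rewrite cnorm_opp, <- surjective_pairing; reflexivity).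
  split; [split|].
  - repeat apply Forall_cons; unfold in_theta; cbn [fst snd]; [| | |apply Forall_nil].
    + split; [lra|split; [apply inJ_r|rewrite kappa_at_r; lra]].
    + split; [lra|split; [apply inJ_r|rewrite kappa_at_r, Hopp; lra]].
    + split; [lra|split; [apply inJ_endpoint|rewrite cnorm_real by lra; apply kappa_nonneg]].
  - cbn. field.
  - unfold holevo, sumR; cbn [fold_right fst snd].
    replace (q / 2 * r + (q / 2 * r + ((1 - q) * (1 - lam * r) + 0))) with s
      by (rewrite Hs at 1; field).
    replace (q / 2 * fst a + (q / 2 * - fst a + ((1 - q) * 0 + 0)),
             q / 2 * snd a + (q / 2 * - snd a + ((1 - q) * 0 + 0))) with (0, 0)
      by (f_equal; field).
    rewrite !vnS_0, (vnS_bloch r (- fst a, - snd a)), Hopp, <- vnS_bloch.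
    unfold xi_formula. fold q. field.
Qed.

Lemma capacity_maximizer : exists sstar, inJ lam r sstar /\
  forall s, inJ lam r s -> h s - xi_formula s <= h sstar - xi_formula sstar.
Proof.
  destruct (continuity_ab_maj (fun s => h s - xi_formula s)
              (Rmin r (1 - lam * r)) (Rmax r (1 - lam * r)) (Rmin_Rmax _ _))
    as [sstar [Hmax HJ]].
  - intros x _. apply continuity_pt_minus; [apply h_continuity_pt|].
    eapply continuity_pt_ext; [intros y; symmetry; apply xi_formula_affine|].
    eapply is_derive_continuity_pt. auto_derive; [trivial|reflexivity].
  - exists sstar. split; [exact HJ|]. intros s Hs. apply (Hmax s Hs).
Qed.

Lemma chi_set_lub sstar : inJ lam r sstar ->
  (forall s, inJ lam r s -> h s - xi_formula s <= h sstar - xi_formula sstar) ->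
  is_lub (chi_set lam r a) (h sstar - xi_formula sstar).
Proof.
  intros HJ Hmax. split.
  - intros x [c [Hc ->]].
    pose proof (Hmax _ (code_population_inJ c Hc)). pose proof (holevo_le c Hc). lra.
  - intros b Hb. apply Hb, holevo_attains, HJ.
Qed.

End ThermalOperations.

Lemma lamb_in_01 E0 E1 kB T : E0 < E1 -> 0 < kB -> 0 < T -> 0 < lamb E0 E1 kB T < 1.
Proof.
  intros HE Hk HT. unfold lamb. split; [apply exp_pos|].
  rewrite <- exp_0. apply exp_increasing.
  assert (0 < (E1 - E0) / (kB * T)) by (apply Rdiv_lt_0_compat; nra).
  unfold Rdiv in *. lra.
Qed.

Lemma neq_gibbs lam r : 0 < lam -> r <> gibbs lam -> (1 + lam) * r - 1 <> 0.
Proof.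
  intros Hl Hg HD. apply Hg. unfold gibbs.
  apply Rmult_eq_reg_l with (1 + lam); [|lra]. field_simplify; lra.
Qed.

Lemma is_glb_unique E x y : is_glb E x -> is_glb E y -> x = y.
Proof. intros [H1 H2] [H3 H4]. apply Rle_antisym; [apply H4|apply H2]; assumption. Qed.

Theorem mainTheorem8 (E0 E1 kB T r : R) (alpha : Cpx) :
  E0 < E1 -> 0 < kB -> 0 < T ->
  0 <= r <= 1 -> cnorm alpha ^ 2 <= r * (1 - r) ->
  r <> gibbs (lamb E0 E1 kB T) ->
  let lam := lamb E0 E1 kB T in
  (forall sbar, inJ lam r sbar ->
     let q := (sbar + lam * r - 1) / ((1 + lam) * r - 1) in
     let v := q * vnS r alpha + (1 - q) * h (1 - lam * r) in
     is_glb (xi_set lam r alpha sbar) v /\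
     exists d, is_decomp lam r sbar d /\
       Forall (fun ps => snd ps = r \/ snd ps = 1 - lam * r) d /\
       decomp_value lam r alpha d = v) /\
  (exists sstar xstar,
     inJ lam r sstar /\ is_glb (xi_set lam r alpha sstar) xstar /\
     is_lub (chi_set lam r alpha) (h sstar - xstar) /\
     forall s x, inJ lam r s -> is_glb (xi_set lam r alpha s) x ->
       h s - x <= h sstar - xstar).
Proof.
  intros HE Hk HT Hr Ha Hg lam.
  pose proof (lamb_in_01 E0 E1 kB T HE Hk HT) as Hl. fold lam in Hl.
  pose proof (neq_gibbs lam r (proj1 Hl) Hg) as HD.
  split.
  - intros sbar HJ q v.
    split; [apply xi_set_glb|apply endpoint_decomp]; assumption.
  - destruct (capacity_maximizer lam r alpha HD) as [sstar [HJ Hmax]].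
    exists sstar, (xi_formula lam r alpha sstar).
    split; [exact HJ|split; [apply xi_set_glb; assumption|split]].
    + apply chi_set_lub; assumption.
    + intros s x Hs Hx.
      rewrite (is_glb_unique _ _ _ Hx (xi_set_glb lam r alpha Hl Ha HD s Hs)).
      apply Hmax, Hs.
Qed.
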